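(* Let $\mathcal G$ and $\mathcal G'$ be two directed Eulerian multigraphs on a finite vertex set $V\ni v_0$, where $j_{u,v}$ and $j'_{u,v}$ denote the multiplicities of the directed edge $\langle u,v\rangle$ in $\mathcal G$ and $\mathcal G'$. Suppose that for all $u,v$, $j'_{u,v}\ge1$ if and only if $j_{u,v}\ge1$, and that $j_{u,v}\ge j'_{u,v}$. Then $$\frac{\mathrm{ar}_{v_0}(\mathcal G')}{\mathrm{ar}_{v_0}(\mathcal G)}\ge\prod_{u\ne v:\ j_{u,v}\ge1}\frac{j'_{u,v}}{j_{u,v}}.$$
   Context: A directed multigraph is Eulerian if it has a circuit traversing every directed edge exactly once (equivalently, connected and in-degree equals out-degree at every vertex). Parallel edges are distinguishable. $\mathrm{ar}_{v_0}(\mathcal G)$ is the number of arborescences of $\mathcal G$ rooted at $v_0$: spanning sub-multigraphs (choosing specific edge copies) forming directed trees in which every vertex $v\ne v_0$ has a unique directed path to $v_0$. *)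

From mathcomp Require Import all_boot all_order all_algebra.
Set Implicit Arguments. Unset Strict Implicit. Unset Printing Implicit Defensive.

(* A directed multigraph on a finite vertex set V is given by its multiplicity
   function j : V -> V -> nat; j u v = number of (distinguishable) copies of
   the directed edge <u,v>. *)

Definition out_deg (V : finType) (j : V -> V -> nat) (v : V) : nat :=
  \sum_(w : V) j v w.
Definition in_deg (V : finType) (j : V -> V -> nat) (v : V) : nat :=
  \sum_(u : V) j u v.

Definition mg_connected (V : finType) (j : V -> V -> nat) : Prop :=
  forall u v : V, connect (fun a b => (0 < j a b) || (0 < j b a)) u v.

Definition eulerian (V : finType) (j : V -> V -> nat) : Prop :=
  mg_connected j /\ forall v : V, in_deg j v = out_deg j v.

(* An arborescence rooted at v0 is determined by its underlying tree,
   encoded by the parent map p (edge <v, p v> for v <> v0; p v0 = v0 and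
   every vertex reaches v0 by iterating p), together with a choice of one of
   the j v (p v) copies of each tree edge. *)
Definition is_arb_parent (V : finType) (v0 : V) (p : {ffun V -> V}) : bool :=
  (p v0 == v0) && [forall v : V, [exists n : 'I_#|V|.+1, iter n p v == v0]].

Definition ar (V : finType) (j : V -> V -> nat) (v0 : V) : nat :=
  \sum_(p : {ffun V -> V} | is_arb_parent v0 p) \prod_(v : V | v != v0) j v (p v).

(* For a
   fixed tree the ratio of its weights in G' and G is the product of j'/j over
   the tree edges only; since every factor j'/j lies in [0, 1], this dominates
   the product over all edges of G.  Summing over trees gives
   (product over all edges) * ar(G) <= ar(G'), and ar(G) > 0 because an Eulerian multigraph is
   strongly connected and hence has a breadth-first arborescence. *)

From mathcomp Require Import all_boot all_order all_algebra.
Import Order.TTheory GRing.Theory Num.Theory.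

Set Implicit Arguments.
Unset Strict Implicit.
Unset Printing Implicit Defensive.

Lemma big_fun_graph (R : Type) (idx : R) (op : Monoid.com_law idx)
    (I J : finType) (P : pred I) (f : I -> J) (F : I * J -> R) :
  \big[op/idx]_(e : I * J | P e.1 && (e.2 == f e.1)) F e
    = \big[op/idx]_(i | P i) F (i, f i).
Proof.
transitivity (\big[op/idx]_(i | P i) \big[op/idx]_(k | k == f i) F (i, k)).
  by rewrite pair_big_dep; apply: eq_bigr => -[].
by apply: eq_bigr => i _; rewrite big_pred1_eq.
Qed.

Section BalancedCut.

Variables (V : finType) (j : V -> V -> nat).
Hypothesis balanced : forall v, in_deg j v = out_deg j v.

(* Summing in_deg = out_deg over S, the internal edges cancel and the edges
   leaving S must balance the (absent) edges entering S. *)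
Lemma balanced_no_out_edge (S : {set V}) :
  (forall a b, a \notin S -> b \in S -> j a b = 0) ->
  forall a b, a \in S -> b \notin S -> j a b = 0.
Proof.
move=> no_in.
have in_int : \sum_(v in S) in_deg j v = \sum_(v in S) \sum_(u in S) j u v.
  apply: eq_bigr => v vS; rewrite /in_deg (bigID (mem S)) /=.
  by rewrite [X in _ + X]big1 ?addn0 // => u uS; apply: no_in.
have out_split : \sum_(v in S) out_deg j v =
    \sum_(v in S) \sum_(w in S) j v w + \sum_(v in S) \sum_(w | w \notin S) j v w.
  by rewrite -big_split; apply: eq_bigr => v _; rewrite /out_deg (bigID (mem S)).
have : \sum_(v in S) in_deg j v = \sum_(v in S) out_deg j v.
  by apply: eq_bigr => v _; apply: balanced.
rewrite in_int out_split exchange_big => /eqP.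
rewrite -{1}[X in X == _]addn0 eqn_add2l eq_sym sum_nat_eq0 => /forallP out0.
move=> a b aS bS; have := out0 a; rewrite aS sum_nat_eq0 => /forallP/(_ b).
by rewrite bS => /eqP.
Qed.

End BalancedCut.

Lemma eulerian_connect (V : finType) (j : V -> V -> nat) :
  eulerian j -> forall u v, connect (fun a b => 0 < j a b) u v.
Proof.
case=> conn balanced u v.
pose S := [set w | connect (fun a b => 0 < j a b) w v].
have no_in a b : a \notin S -> b \in S -> j a b = 0.
  rewrite !inE => aS bS; apply/eqP; rewrite eqn0Ngt.
  by apply: contra aS => jab; apply: connect_trans bS; apply: connect1.
have no_out := @balanced_no_out_edge V j balanced S no_in.
have closedS : closed (fun a b => (0 < j a b) || (0 < j b a)) S.
  move=> a b jab; apply/idP/idP => [aS|bS]; apply: contraTT jab => S'.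
    by rewrite (no_out a b) // (no_in b a).
  by rewrite (no_in a b) // (no_out b a).
by have := closed_connect closedS (conn u v); rewrite !inE connect0 => ->.
Qed.

Section BreadthFirstArborescence.

Variables (V : finType) (e : rel V) (v0 : V).
Hypothesis reach_root : forall v, connect e v v0.

Let reaches_in (n : nat) (v : V) :=
  [exists s : n.-tuple V, path e v s && (last v s == v0)].

Lemma reaches_in_path v (s : seq V) :
  path e v s -> last v s = v0 -> reaches_in (size s) v.
Proof.
by move=> es lst; apply/existsP; exists (in_tuple s); rewrite /= es lst eqxx.
Qed.

Lemma exists_reaches_in v : exists n, reaches_in n v.
Proof.
have /connectP[s es /esym lst] := reach_root v.
by exists (size s); apply: reaches_in_path.
Qed.

Let depth v := ex_minn (exists_reaches_in v).

Lemma depth_reaches v : reaches_in (depth v) v.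
Proof. by rewrite /depth; case: ex_minnP. Qed.

Lemma depth_min v n : reaches_in n v -> depth v <= n.
Proof. by rewrite /depth; case: ex_minnP => m _; apply. Qed.

Lemma depth_lt_card v : depth v < #|V|.
Proof.
have /connectP[s es /esym lst] := reach_root v.
case/shortenP: es lst => s' es' uniq_s' _ lst.
apply: (@leq_ltn_trans (size s')); first exact: depth_min (reaches_in_path es' lst).
by have := max_card (mem (v :: s')); rewrite (card_uniqP uniq_s').
Qed.

Lemma depth0_root v : depth v = 0 -> v = v0.
Proof.
move=> d0; have := depth_reaches v; rewrite d0 => /existsP[s].
by rewrite tuple0 /= => /eqP.
Qed.

Lemma depth_step v : v != v0 -> exists w, e v w && (depth w < depth v).
Proof.
move=> nv; have := depth_reaches v.
case Ed: (depth v) => [|k]; first by rewrite (depth0_root Ed) eqxx in nv.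
case/existsP => t; case/tupleP: t => w s /= /andP[/andP[evw es] lst].
by exists w; rewrite evw ltnS depth_min //; apply/existsP; exists s; rewrite es.
Qed.

Let parent := [ffun v => if v == v0 then v0
  else odflt v0 [pick w | e v w && (depth w < depth v)]].

Lemma parent_root : parent v0 = v0.
Proof. by rewrite ffunE eqxx. Qed.

Lemma parent_step v : v != v0 -> e v (parent v) && (depth (parent v) < depth v).
Proof.
move=> nv; rewrite ffunE (negbTE nv); case: pickP => [//|none].
by have [w] := depth_step nv; rewrite none.
Qed.

Lemma iter_parent n v : depth v <= n -> iter n parent v = v0.
Proof.
elim: n v => [|n IHn] v; first by rewrite leqn0 => /eqP/depth0_root.
move=> dv; have [->|nv] := eqVneq v v0; first by rewrite iter_fix ?parent_root.
rewrite iterSr; apply: IHn; rewrite -ltnS.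
by apply: leq_trans dv; case/andP: (parent_step nv).
Qed.

Lemma exists_arb_parent :
  exists2 p, is_arb_parent v0 p & forall v, v != v0 -> e v (p v).
Proof.
exists parent; last by move=> v /parent_step/andP[].
rewrite /is_arb_parent parent_root eqxx; apply/forallP => v; apply/existsP.
by exists (Ordinal (leqW (depth_lt_card v))); rewrite /= iter_parent.
Qed.

End BreadthFirstArborescence.

Lemma arb_parent_loopfree (V : finType) (v0 : V) (p : {ffun V -> V}) v :
  is_arb_parent v0 p -> v != v0 -> p v != v.
Proof.
case/andP=> _ /forallP/(_ v)/existsP[n] reach nv; apply/eqP => pv.
by rewrite iter_fix // (negbTE nv) in reach.
Qed.

Lemma ar_gt0 (V : finType) (j : V -> V -> nat) (v0 : V) :
  eulerian j -> 0 < ar j v0.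
Proof.
move=> /eulerian_connect conn.
have [p arb_p jp_gt0] := exists_arb_parent (fun v => conn v v0).
by rewrite /ar (bigD1 p) //= ltn_addr // prodn_cond_gt0.
Qed.

Local Open Scope ring_scope.

Lemma prodr_le_subset (R : numDomainType) (I : finType) (P Q : pred I)
    (F : I -> R) :
  {subset Q <= P} -> (forall i, P i -> 0 <= F i <= 1) ->
  \prod_(i | P i) F i <= \prod_(i | Q i) F i.
Proof.
move=> sQP F01; rewrite (bigID Q) /=.
have -> : \prod_(i | P i && Q i) F i = \prod_(i | Q i) F i.
  by apply: eq_bigl => i; apply: andb_idl; apply: sQP.
apply: ler_piMr.
  by apply: prodr_ge0 => i /sQP/F01/andP[].
by apply: prodr_ile1 => i /andP[/F01].
Qed.

Section WeightRatio.

Variables (R : numFieldType) (V : finType) (v0 : V) (j j' : V -> V -> nat).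
Hypothesis le_j'j : forall u v, (j' u v <= j u v)%N.

Let ratio (x : V * V) : R := (j' x.1 x.2)%:R / (j x.1 x.2)%:R.

Lemma ratio01 x : 0 <= ratio x <= 1.
Proof.
rewrite divr_ge0 ?ler0n //=; have [j0|jpos] := posnP (j x.1 x.2).
  by rewrite /ratio j0 invr0 mulr0.
by rewrite ler_pdivrMr ?ltr0n // mul1r ler_nat.
Qed.

Lemma prod_ratio_le_tree (p : {ffun V -> V}) :
  is_arb_parent v0 p -> (forall v, v != v0 -> (0 < j v (p v))%N) ->
  \prod_(x : V * V | (x.1 != x.2) && (0 < j x.1 x.2)%N) ratio x
    <= \prod_(v | v != v0) ratio (v, p v).
Proof.
move=> arb_p jp_gt0; rewrite -(big_fun_graph _ (fun v => v != v0)).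
apply: prodr_le_subset => [[a b] /andP[/= na /eqP->]|x _]; last exact: ratio01.
by rewrite unfold_in /= eq_sym (arb_parent_loopfree arb_p na) jp_gt0.
Qed.

Lemma tree_weight_ratio (p : {ffun V -> V}) :
  is_arb_parent v0 p ->
  (\prod_(x : V * V | (x.1 != x.2) && (0 < j x.1 x.2)%N) ratio x)
      * (\prod_(v | v != v0) j v (p v))%:R
    <= (\prod_(v | v != v0) j' v (p v))%:R.
Proof.
move=> arb_p; have [jp_gt0|] := boolP [forall v, (v != v0) ==> (0 < j v (p v))%N];
  last first.
  case/forallPn=> v; rewrite negb_imply -eqn0Ngt => /andP[nv /eqP jv0].
  by rewrite (bigD1 v) //= jv0 mul0n mulr0 ler0n.
have {}jp_gt0 v : v != v0 -> (0 < j v (p v))%N.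
  by move=> nv; move/forallP/(_ v): jp_gt0; rewrite nv.
have -> : (\prod_(v | v != v0) j' v (p v))%:R
    = \prod_(v | v != v0) ratio (v, p v) * (\prod_(v | v != v0) j v (p v))%:R.
  rewrite !natr_prod -big_split; apply: eq_bigr => v nv.
  by rewrite /ratio /= divfK // pnatr_eq0 -lt0n jp_gt0.
by rewrite ler_wpM2r ?ler0n ?prod_ratio_le_tree.
Qed.

Lemma ar_weight_ratio :
  (\prod_(x : V * V | (x.1 != x.2) && (0 < j x.1 x.2)%N) ratio x) * (ar j v0)%:R
    <= (ar j' v0)%:R.
Proof.
rewrite /ar !natr_sum mulr_sumr; apply: ler_sum => p arb_p.
exact: tree_weight_ratio.
Qed.

End WeightRatio.

Theorem claim4p7 (V : finType) (v0 : V) (j j' : V -> V -> nat) :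
  eulerian j -> eulerian j' ->
  (forall u v : V, (1 <= j' u v)%N = (1 <= j u v)%N) ->
  (forall u v : V, (j' u v <= j u v)%N) ->
  \prod_(e : V * V | (e.1 != e.2) && (1 <= j e.1 e.2)%N)
      ((j' e.1 e.2)%:R / (j e.1 e.2)%:R : rat)
    <= (ar j' v0)%:R / (ar j v0)%:R.
Proof.
move=> eul_j _ _ le_j'j.
by rewrite ler_pdivlMr ?ltr0n ?ar_gt0 // ar_weight_ratio.
Qed.
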